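(* Let $G(V)$ be a network, $\varepsilon>0$, and $S\subseteq V$ with $|S|\ge2$ such that $R_{\mathrm{eff}}(u,v)\ge\varepsilon$ for all distinct $u,v\in S$. Then there is $S'\subseteq S$ with $|S'|\ge|S|/2$ such that $R_{\mathrm{eff}}(v,S\setminus\{v\})\ge\varepsilon/4$ for every $v\in S'$.
   Context: A network is a finite connected graph $G=(V,E)$ with symmetric conductances $c_{xy}\ge0$, $c_{xy}>0$ iff $xy\in E$; $R_{\mathrm{eff}}$ is effective resistance. For $v\in V$ and nonempty $T\subseteq V\setminus\{v\}$, $R_{\mathrm{eff}}(v,T)$ is the effective resistance between $v$ and the vertex obtained by identifying all vertices of $T$ into one vertex (conductances from $x$ to the glued vertex being $\sum_{y\in T}c_{xy}$). *)

From HB Require Import structures.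
From mathcomp Require Import all_boot all_order all_algebra.
From Stdlib Require Import ClassicalEpsilon.
Set Implicit Arguments. Unset Strict Implicit. Unset Printing Implicit Defensive.
Import Order.TTheory GRing.Theory Num.Theory.
Local Open Scope ring_scope.

(* A network on the finite vertex type V: conductances c, with
   c x y > 0 iff xy is an edge.  The graph is finite, loopless,
   the conductances symmetric and nonnegative, and the graph connected. *)
Definition network (R : realFieldType) (V : finType) (c : V -> V -> R) : Prop :=
  [/\ forall x y, c x y = c y x,
      forall x y, 0 <= c x y,
      forall x, c x x = 0
    & forall x y, connect (fun u w => 0 < c u w) x y].

(* This is exactly the voltage on the network in which T is glued
   into a single vertex (conductance from x to the glued vertex being
   sum_{y in T} c x y). *)
Definition unit_potential (R : realFieldType) (V : finType) (c : V -> V -> R)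
  (a : V) (T : {set V}) (f : {ffun V -> R}) : Prop :=
  [/\ f a = 1,
      forall b, b \in T -> f b = 0
    & forall x, x != a -> x \notin T -> \sum_(y : V) c x y * (f y - f x) = 0].

(* The (unique, for a connected network and nonempty T not containing a)
   unit potential, selected by choice. *)
Definition potential (R : realFieldType) (V : finType) (c : V -> V -> R)
  (a : V) (T : {set V}) : {ffun V -> R} :=
  epsilon (inhabits [ffun => 0]) (unit_potential c a T).

(* Effective resistance R_eff(a, T) = 1 / (current out of a under unit voltage). *)
Definition Reff (R : realFieldType) (V : finType) (c : V -> V -> R)
  (a : V) (T : {set V}) : R :=
  (\sum_(y : V) c a y * (potential c a T a - potential c a T y))^-1.

(* Hold v \in S at potential 1 and S :\ v at 0.  The current 1/R_eff(v, S :\ v)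
   leaving v is absorbed at the other points w of S, in amounts i_v(w) >= 0.
   Expressing R_eff(u, w) through Green functions and using the reciprocity
   i_v(w) = i_w(v) gives the identity
     sum_v sum_(w <> v) i_v(w) R_eff(v, w) = 2 (|S| - 1).
   Since every R_eff(v, w) >= eps, this yields
     sum_v eps / R_eff(v, S :\ v) <= 2 (|S| - 1),
   and by a Markov-type count at most half of S has eps / R_eff(v, S :\ v) > 4. *)

From HB Require Import structures.
From mathcomp Require Import all_boot all_order all_algebra ring lra zify.
From Stdlib Require Import ClassicalEpsilon.
Set Implicit Arguments. Unset Strict Implicit. Unset Printing Implicit Defensive.
Import Order.TTheory GRing.Theory Num.Theory.
Local Open Scope ring_scope.

Section Laplacian.
Variables (R : realFieldType) (V : finType) (c : V -> V -> R).

Definition lap (f : V -> R) (x : V) : R := \sum_y c x y * (f y - f x).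

Lemma lapB f g x : lap (fun y => f y - g y) x = lap f x - lap g x.
Proof. by rewrite /lap -sumrB; apply: eq_bigr => y _; ring. Qed.

Lemma lapN f x : lap (fun y => - f y) x = - lap f x.
Proof. by rewrite /lap -sumrN; apply: eq_bigr => y _; ring. Qed.

Lemma lapZ a f x : lap (fun y => a * f y) x = a * lap f x.
Proof. by rewrite /lap mulr_sumr; apply: eq_bigr => y _; ring. Qed.

Lemma lap_cst k x : lap (fun=> k) x = 0.
Proof. by rewrite /lap big1 // => y _; rewrite subrr mulr0. Qed.

Hypothesis c_sym : forall x y, c x y = c y x.

Lemma sum_lap f : \sum_x lap f x = 0.
Proof.
rewrite /lap; under eq_bigr do under eq_bigr do rewrite mulrBr.
under eq_bigr do rewrite sumrB.
rewrite sumrB exchange_big /=; apply/eqP; rewrite subr_eq0; apply/eqP.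
by apply: eq_bigr => y _; apply: eq_bigr => x _; rewrite c_sym.
Qed.

Lemma green_identity f g : \sum_x g x * lap f x = \sum_x f x * lap g x.
Proof.
have expand h k : \sum_x k x * lap h x =
    \sum_x \sum_y c x y * (k x * h y) - \sum_x \sum_y c x y * (k x * h x).
  rewrite -sumrB; apply: eq_bigr => x _; rewrite /lap -sumrB mulr_sumr.
  by apply: eq_bigr => y _; ring.
rewrite !expand; congr (_ - _).
  rewrite exchange_big /=; apply: eq_bigr => y _; apply: eq_bigr => x _.
  by rewrite c_sym; ring.
by apply: eq_bigr => x _; apply: eq_bigr => y _; rewrite [_ * f x]mulrC.
Qed.

End Laplacian.

Section Network.
Variables (R : realFieldType) (V : finType) (c : V -> V -> R).
Hypothesis net : network c.

Let c_sym : forall x y, c x y = c y x. Proof. by case: net. Qed.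
Let c_ge0 : forall x y, 0 <= c x y. Proof. by case: net. Qed.

(* A minimum attained off [A] propagates along edges and, by connectedness,
   reaches [a \in A]. *)
Lemma minimum_principle (f : V -> R) (A : {set V}) a m : a \in A ->
  (forall x, x \notin A -> lap c f x = 0) -> (forall x, x \in A -> m <= f x) ->
  forall x, m <= f x.
Proof.
move=> aA harm bnd x.
case: (@arg_minP _ R V a predT f isT) => x0 _ minx0.
have [mle|fx0m] := leP m (f x0); first exact: le_trans mle (minx0 x isT).
have notA u : f u = f x0 -> u \notin A.
  by move=> fu; apply/negP => /bnd; rewrite fu leNgt fx0m.
have min_step u w : 0 < c u w -> f u = f x0 -> f w = f x0.
  move=> cuw fu; have := harm u (notA u fu); rewrite /lap => /eqP.
  rewrite psumr_eq0 => [/allP/(_ w (mem_index_enum w))|y _]; last first.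
    by rewrite mulr_ge0 // subr_ge0 fu minx0.
  by rewrite mulf_eq0 (gt_eqF cuw) subr_eq0 fu => /eqP.
have cl : closed (fun u w => 0 < c u w) [pred y | f y == f x0].
  move=> u w cuw; rewrite !inE; apply/eqP/eqP; first exact: min_step.
  by apply: min_step; rewrite c_sym.
have := closed_connect cl (let: And4 _ _ _ conn := net in conn x0 a).
by rewrite !inE eqxx => /esym/eqP/notA; rewrite aA.
Qed.

Lemma maximum_principle (f : V -> R) (A : {set V}) a m : a \in A ->
  (forall x, x \notin A -> lap c f x = 0) -> (forall x, x \in A -> f x <= m) ->
  forall x, f x <= m.
Proof.
move=> aA harm bnd x; rewrite -lerN2.
apply: (minimum_principle (f := fun y => - f y) aA) => y yA.
  by rewrite lapN harm ?oppr0.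
by rewrite lerN2 bnd.
Qed.

Lemma harmonic_eq0 (f : V -> R) (A : {set V}) a : a \in A ->
  (forall x, x \notin A -> lap c f x = 0) -> (forall x, x \in A -> f x = 0) ->
  forall x, f x = 0.
Proof.
move=> aA harm bnd x; apply/eqP; rewrite eq_le.
by rewrite (maximum_principle aA harm) ?(minimum_principle aA harm) // => y /bnd ->.
Qed.

Lemma harmonic_cst (f : V -> R) : (forall x, lap c f x = 0) -> forall x y, f x = f y.
Proof.
move=> harm x y; apply/eqP; rewrite -subr_eq0; apply/eqP.
apply: (harmonic_eq0 (f := fun z => f z - f y) (set11 y)) => z.
  by rewrite lapB harm lap_cst subr0.
by rewrite inE => /eqP ->; rewrite subrr.
Qed.

(* Row [z] of the Dirichlet operator: the identity on [B], the Laplacian off [B]. *)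
Definition dirichlet_coef (B : {set V}) (z x : V) : R :=
  if x \in B then (z == x)%:R else c x z - (z == x)%:R * \sum_y c x y.

Lemma sum_dirichlet_coef (B : {set V}) (u : V -> R) x :
  \sum_z u z * dirichlet_coef B z x = if x \in B then u x else lap c u x.
Proof.
have sum_delta (F : V -> R) : \sum_z (z == x)%:R * F z = F x.
  by rewrite (bigD1 x) //= eqxx mul1r big1 ?addr0 // => z /negbTE ->; rewrite mul0r.
rewrite /dirichlet_coef; case: ifP => _.
  by under eq_bigr do rewrite mulrC; rewrite sum_delta.
under eq_bigr do rewrite mulrBr [_ * (_ * _)]mulrCA.
by rewrite sumrB sum_delta /lap mulr_sumr -sumrB; apply: eq_bigr => y _; ring.
Qed.

Lemma dirichlet_solvable (B : {set V}) b (bv : V -> R) : b \in B ->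
  exists u : {ffun V -> R},
    (forall x, x \in B -> u x = bv x) /\ (forall x, x \notin B -> lap c u x = 0).
Proof.
move=> bB.
pose M : 'M[R]_#|V| := \matrix_(i, j) dirichlet_coef B (enum_val i) (enum_val j).
have M_apply (r : 'rV[R]_#|V|) x : (r *m M) 0 (enum_rank x) =
    if x \in B then r 0 (enum_rank x) else lap c (fun y => r 0 (enum_rank y)) x.
  rewrite -sum_dirichlet_coef mxE (reindex (@enum_val V predT)); last first.
    by apply: onW_bij; exact: enum_val_bij.
  by apply: eq_bigr => i _; rewrite mxE enum_valK enum_rankK.
have M_unit : M \in unitmx.
  rewrite -row_free_unit -kermx_eq0; apply/rowV0P => v /sub_kermxP vM0.
  apply/rowP => i; rewrite mxE -(enum_valK i).
  apply: (harmonic_eq0 (f := fun y => v 0 (enum_rank y)) bB) => x xB.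
    by have := M_apply v x; rewrite vM0 mxE (negbTE xB).
  by have := M_apply v x; rewrite vM0 mxE xB.
pose t : 'rV[R]_#|V| := \row_j (if enum_val j \in B then bv (enum_val j) else 0).
pose r := t *m invmx M.
have rM : r *m M = t by rewrite -mulmxA mulVmx // mulmx1.
exists [ffun x => r 0 (enum_rank x)]; split => x xB; have := M_apply r x;
  rewrite rM mxE enum_rankK ?xB ?(negbTE xB) ?ffunE // => ->.
by rewrite /lap; under eq_bigr do rewrite !ffunE.
Qed.

Lemma unit_potential_harmonic a (T : {set V}) f : unit_potential c a T f ->
  forall x, x \notin a |: T -> lap c f x = 0.
Proof. by case=> _ _ fh x; rewrite in_setU1 negb_or => /andP[]; apply: fh. Qed.

Lemma potentialP a (T : {set V}) t : t \in T -> a \notin T ->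
  unit_potential c a T (potential c a T).
Proof.
move=> tT aT; apply: epsilon_spec.
have [u [uB uh]] := dirichlet_solvable (fun x => (x == a)%:R) (setU11 a T).
exists u; split.
- by rewrite uB ?setU11 ?eqxx.
- by move=> b bT; rewrite uB ?inE ?bT ?orbT //; case: eqVneq bT aT => // ->->.
- by move=> x xa xT; apply: uh; rewrite in_setU1 negb_or xa.
Qed.

Lemma unit_potential_bounds a (T : {set V}) f : unit_potential c a T f ->
  forall x, 0 <= f x <= 1.
Proof.
move=> fP x; have [fa fT _] := fP.
have onB y : y \in a |: T -> f y = 1 \/ f y = 0.
  by rewrite in_setU1 => /orP[/eqP->|/fT->]; [left|right].
have harm := unit_potential_harmonic fP.
rewrite (minimum_principle (setU11 a T) harm) ?(maximum_principle (setU11 a T) harm) //.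
  by move=> y /onB[]->; rewrite ?ler01.
by move=> y /onB[]->; rewrite ?ler01.
Qed.

Lemma unit_potential_current_gt0 a (T : {set V}) t f : t \in T ->
  unit_potential c a T f -> 0 < - lap c f a.
Proof.
move=> tT fP; have [fa fT fh] := fP.
have current_ge0 : 0 <= - lap c f a.
  rewrite /lap -sumrN sumr_ge0 // => y _; rewrite -mulrN opprB fa mulr_ge0 //.
  by rewrite subr_ge0; case/andP: (unit_potential_bounds fP y).
rewrite lt_def current_ge0 andbT oppr_eq0; apply/negP => /eqP no_current.
suff : f a <= 0 by rewrite fa ler10.
apply: (maximum_principle tT) => [x xT|x /fT->//].
by case: (eqVneq x a) => [->//|xa]; apply: fh.
Qed.

Lemma Reff_current a (T : {set V}) : Reff c a T = (- lap c (potential c a T) a)^-1.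
Proof. by rewrite /Reff /lap -sumrN; congr _^-1; apply: eq_bigr => y _; ring. Qed.

(* The potential of a unit current entering at [u] and leaving at [r],
   grounded at [r]. *)
Definition green (r u : V) (x : V) : R :=
  if u == r then 0 else Reff c u [set r] * potential c u [set r] x.

Lemma lap_green r u x : lap c (green r u) x = (x == r)%:R - (x == u)%:R.
Proof.
rewrite /green; case: (eqVneq u r) => [->|ur]; first by rewrite lap_cst subrr.
have uT : u \notin [set r] by rewrite inE.
have fP := potentialP (set11 r) uT.
have I_gt0 := unit_potential_current_gt0 (set11 r) fP.
rewrite lapZ Reff_current; set f := potential c u [set r] in fP I_gt0 *.
have harm := unit_potential_harmonic fP.
have lap_r : lap c f r = - lap c f u.
  have := sum_lap c_sym f; rewrite (bigD1 u) //= (bigD1 r) 1?eq_sym //= big1.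
    by rewrite addr0 addrC => /eqP; rewrite addr_eq0 => /eqP.
  by move=> y /andP[yu yr]; apply: harm; rewrite !inE negb_or yu.
case: (eqVneq x u) => [->|xu].
  by rewrite (negbTE ur) sub0r -{2}[lap c f u]opprK mulrN mulVf ?gt_eqF.
case: (eqVneq x r) => [->|xr]; first by rewrite subr0 lap_r mulVf ?gt_eqF.
by rewrite subrr (harm x) ?mulr0 // !inE negb_or xu.
Qed.

Lemma Reff_green r v w : v != w ->
  Reff c v [set w] = (green r v v - green r w v) - (green r v w - green r w w).
Proof.
move=> vw; have vT : v \notin [set w] by rewrite inE.
have [fv fw _] := potentialP (set11 w) vT.
have green_wv : green w v v - green w v w = Reff c v [set w].
  by rewrite /green (negbTE vw) fv fw ?set11 // mulr1 mulr0 subr0.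
pose d x := (green r v x - green r w x) - green w v x.
have d_harm x : lap c d x = 0 by rewrite !lapB !lap_green; ring.
have := harmonic_cst d_harm v w; rewrite /d -green_wv; lra.
Qed.

Section Hitting.
Variable S : {set V}.
Hypothesis S2 : (2 <= #|S|)%N.

Definition hit (v : V) : {ffun V -> R} := potential c v (S :\ v).

(* The current absorbed at [w] when [v] is held at potential 1 and [S :\ v] at 0. *)
Definition flux (v w : V) : R := lap c (hit v) w.

Let other_in_S v : exists t, t \in S :\ v.
Proof.
apply/set0Pn; rewrite -card_gt0.
by move: S2 (cardsD1 v S); case: (v \in S) => /=; lia.
Qed.

Lemma hitP v : unit_potential c v (S :\ v) (hit v).
Proof. by have [t tS] := other_in_S v; apply: potentialP tS _; rewrite !inE eqxx. Qed.

Lemma hit_on_S v w : w \in S -> hit v w = (w == v)%:R.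
Proof.
move=> wS; have [hv hS _] := hitP v.
by case: eqVneq => [->//|wv]; rewrite hS // !inE wv.
Qed.

Lemma flux_off_S v x : v \in S -> x \notin S -> flux v x = 0.
Proof.
move=> vS xS; apply: (unit_potential_harmonic (hitP v)).
by rewrite !inE (negbTE xS) andbF orbF; apply: contraNneq xS => ->.
Qed.

Lemma sum_flux v : v \in S -> \sum_(w in S) flux v w = 0.
Proof.
move=> vS; rewrite big_mkcond -[RHS](sum_lap c_sym (hit v)); apply: eq_bigr => x _.
by case: ifPn => // /(flux_off_S vS) <-.
Qed.

Lemma flux_ge0 v w : w \in S -> w != v -> 0 <= flux v w.
Proof.
move=> wS wv; rewrite /flux /lap hit_on_S // (negbTE wv).
apply: sumr_ge0 => y _; rewrite subr0 mulr_ge0 //.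
by case/andP: (unit_potential_bounds (hitP v) y).
Qed.

Lemma inv_Reff_flux v : v \in S ->
  (Reff c v (S :\ v))^-1 = \sum_(w in S | w != v) flux v w.
Proof.
move=> vS; rewrite Reff_current invrK.
change (- flux v v = \sum_(w in S | w != v) flux v w).
have := sum_flux vS; rewrite (bigD1 v) //= => /eqP; rewrite addr_eq0 => /eqP ->.
by rewrite opprK.
Qed.

Lemma Reff_gt0 v : 0 < Reff c v (S :\ v).
Proof.
have [t tS] := other_in_S v.
by rewrite Reff_current invr_gt0 (unit_potential_current_gt0 tS (hitP v)).
Qed.

Lemma sum_hit_mul v (F : V -> R) : v \in S -> (forall x, x \notin S -> F x = 0) ->
  \sum_x hit v x * F x = F v.
Proof.
move=> vS F0; rewrite (bigD1 v) //= hit_on_S // eqxx mul1r big1 ?addr0 // => x xv.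
have [xS|xS] := boolP (x \in S); first by rewrite hit_on_S // (negbTE xv) mul0r.
by rewrite F0 // mulr0.
Qed.

Lemma flux_sym v w : v \in S -> w \in S -> flux v w = flux w v.
Proof.
move=> vS wS; rewrite -(@sum_hit_mul w (flux v)) => [|//|x]; last exact: flux_off_S.
rewrite /flux green_identity // (@sum_hit_mul v (flux w)) // => x.
exact: flux_off_S.
Qed.

Lemma sum_flux_green r v : v \in S -> r \in S ->
  \sum_(w in S) flux v w * (green r v v - green r v w) = (v != r)%:R.
Proof.
move=> vS rS.
have delta_off_S x : x \notin S -> (x == r)%:R - (x == v)%:R = 0 :> R.
  move=> xS; have [xr xv] : x != r /\ x != v by split; apply: contraNneq xS => ->.
  by rewrite (negbTE xr) (negbTE xv) subrr.
have green_flux : \sum_(w in S) flux v w * green r v w = \sum_x green r v x * flux v x.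
  rewrite big_mkcond; apply: eq_bigr => x _.
  by case: ifPn => [_|/(flux_off_S vS) ->]; rewrite ?mul0r ?mulr0 // mulrC.
under eq_bigr do rewrite mulrBr [flux v _ * green _ _ v]mulrC.
rewrite sumrB -mulr_sumr sum_flux // mulr0 sub0r green_flux /flux green_identity //.
under eq_bigr do rewrite lap_green.
by rewrite sum_hit_mul // eqxx opprB; case: eqP; rewrite ?subrr ?subr0.
Qed.

(* With Green functions grounded at a fixed [r \in S], by reciprocity each [v]
   contributes [sum_flux_green r v = (v != r)] twice. *)
Lemma sum_flux_Reff :
  \sum_(v in S) \sum_(w in S | w != v) flux v w * Reff c v [set w] = 2 * (#|S|%:R - 1).
Proof.
have [r rS] : exists r, r \in S by apply/set0Pn; rewrite -card_gt0 (ltn_trans _ S2).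
pose g := green r; pose D v w := (g v v - g v w) - (g w v - g w w).
have -> : \sum_(v in S) \sum_(w in S | w != v) flux v w * Reff c v [set w] =
    \sum_(v in S) \sum_(w in S) flux v w * D v w.
  apply: eq_bigr => v vS; rewrite [RHS](bigD1 v) //= /D !subrr mulr0 add0r.
  by apply: eq_bigr => w /andP[_ wv]; rewrite (Reff_green r) 1?eq_sym // /D /g; ring.
have swap : \sum_(v in S) \sum_(w in S) flux v w * (g w v - g w w) =
    - \sum_(w in S) \sum_(v in S) flux w v * (g w w - g w v).
  rewrite exchange_big -sumrN; apply: eq_bigr => w wS; rewrite -sumrN.
  by apply: eq_bigr => v vS; rewrite flux_sym //; ring.
have count_r : \sum_(v in S) (v != r)%:R = #|S|%:R - 1 :> R.
  rewrite (big_setD1 r) //= eqxx add0r (eq_bigr (fun=> 1)) => [|v].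
    by rewrite sumr_const (cardsD1 r S) rS add1n -addn1 natrD addrK.
  by rewrite in_setD1 => /andP[->].
under eq_bigr do under eq_bigr do rewrite /D mulrBr.
under eq_bigr do rewrite sumrB.
rewrite sumrB swap opprK.
under eq_bigr do rewrite sum_flux_green //.
by rewrite count_r; ring.
Qed.

Lemma sum_eps_div_Reff_le eps :
  (forall u v, u \in S -> v \in S -> u != v -> eps <= Reff c u [set v]) ->
  \sum_(v in S) eps / Reff c v (S :\ v) <= 2 * (#|S|%:R - 1).
Proof.
move=> Reff_ge; rewrite -sum_flux_Reff; apply: ler_sum => v vS.
rewrite inv_Reff_flux // mulr_sumr; apply: ler_sum => w /andP[wS wv].
by rewrite mulrC ler_wpM2l ?flux_ge0 // Reff_ge // eq_sym.
Qed.

End Hitting.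
End Network.

Lemma card_le_double_le4 (R : realFieldType) (T : finType) (S : {set T}) (a : T -> R) :
  (forall v, v \in S -> 0 <= a v) -> \sum_(v in S) a v <= 2 * (#|S|%:R - 1) ->
  (#|S| <= 2 * #|[set v in S | (a v <= 4)%R]|)%N.
Proof.
move=> a_ge0 sum_le; set S' := [set v in S | a v <= 4].
have S'S : S' \subset S by apply/subsetP => v; rewrite inE => /andP[].
have big_off_S' : 4 * #|S :\: S'|%:R <= \sum_(v in S) a v.
  rewrite (big_setID S') /= -[X in X <= _]add0r lerD ?sumr_ge0 //.
    by move=> v /setIP[vS _]; apply: a_ge0.
  rewrite -sumr_const mulr_sumr mulr1; apply: ler_sum => v.
  by rewrite !inE negb_and => /andP[/orP[/negPf->//|]]; rewrite -ltNge => /ltW.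
have : (4 * #|S :\: S'| + 2 <= 2 * #|S|)%N.
  rewrite -(ler_nat R) natrD !natrM.
  by move: (le_trans big_off_S' sum_le); lra.
by rewrite -(cardsID S' S) (setIidPr S'S); lia.
Qed.

Theorem mainTheorem15 (R : realFieldType) (V : finType) (c : V -> V -> R)
  (eps : R) (S : {set V}) :
  network c -> 0 < eps -> (2 <= #|S|)%N ->
  (forall u v, u \in S -> v \in S -> u != v -> eps <= Reff c u [set v]) ->
  exists S' : {set V},
    [/\ S' \subset S, (#|S| <= 2 * #|S'|)%N
      & forall v, v \in S' -> eps / 4%:R <= Reff c v (S :\ v)].
Proof.
move=> net eps_gt0 S2 Reff_ge.
pose a v := eps / Reff c v (S :\ v).
have a_ge0 v : v \in S -> 0 <= a v.
  by move=> _; rewrite divr_ge0 ?ltW ?(Reff_gt0 net S2).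
exists [set v in S | a v <= 4]; split.
- by apply/subsetP => v; rewrite inE => /andP[].
- exact: card_le_double_le4 a_ge0 (sum_eps_div_Reff_le net S2 Reff_ge).
- move=> v; rewrite inE => /andP[_].
  by rewrite !ler_pdivrMr ?(Reff_gt0 net S2) ?ltr0n // mulrC.
Qed.
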